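(* Let $(W,S)$ be a Coxeter system and partition $S=B\sqcup C$. Let $f,f'\in W_B$ and $g,g'\in W_C$. Then $\ell(fg)=\ell(gf)=\ell(f)+\ell(g)$. Let $s\in B$ be a simple reflection commuting with every element of $C$, and $t\in B$ arbitrary. Then: (1) $s\in\mathcal R(f)$ if and only if $s\in\mathcal R(gfg')$; (2) if $t\notin\mathcal R(f)$ then $t\notin\mathcal R(fg)$; (3) $t\in\mathcal R(f)$ if and only if $t\in\mathcal R(gf)$; (4) if $t\notin\mathcal R(f)$ then $t\notin\mathcal R(gfg')$; (5) if $\ell(ff')=\ell(f)+\ell(f')$, then $t\in\mathcal R(f')$ implies $t\in\mathcal R(fgf')$.
   Context: $W_B$, $W_C$ denote the standard parabolic subgroups generated by $B$ and $C$; $\ell$ is the length function and $\mathcal R(w)$ the right descent set $\{u\in S:\ell(wu)<\ell(w)\}$. *)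

From HB Require Import structures.
From mathcomp Require Import all_boot.
From Stdlib Require Import ClassicalEpsilon.
From Stdlib Require List.
Set Implicit Arguments. Unset Strict Implicit. Unset Printing Implicit Defensive.
Local Open Scope group_scope.

Section Coxeter.
Variable W : groupType.

Definition prodw (l : seq W) : W := \prod_(x <- l) x.

(* (W,S) is a Coxeter system (Bourbaki): the elements of S are involutions
   (of order 2), S generates W, and W has the presentation
   < S | (s t)^{m(s,t)} = 1 >, m(s,t) = order of st, expressed by the
   universal property: any map f : S -> H into a group H such that
   (f s f t)^n = 1 whenever (s t)^n = 1 in W extends to a homomorphism. *)
Definition coxeter_system (S : W -> Prop) : Prop :=
  (forall s, S s -> s <> 1 /\ s * s = 1) /\
  (forall w, exists l, List.Forall S l /\ prodw l = w) /\
  (forall (H : groupType) (f : W -> H),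
     (forall s t n, S s -> S t -> (s * t) ^+ n = 1 -> (f s * f t) ^+ n = 1) ->
     exists phi : W -> H,
       (forall x y, phi (x * y) = phi x * phi y) /\
       (forall s, S s -> phi s = f s)).

Definition has_word_len (S : W -> Prop) (w : W) (n : nat) : Prop :=
  exists l, List.Forall S l /\ size l = n /\ prodw l = w.

Definition coxlen (S : W -> Prop) (w : W) : nat :=
  epsilon (inhabits 0%N)
    (fun n => has_word_len S w n /\ forall m, has_word_len S w m -> (n <= m)%N).

Definition parabolic (B : W -> Prop) (w : W) : Prop :=
  exists l, List.Forall (fun x => B x \/ B x^-1) l /\ prodw l = w.

Definition rdescent (S : W -> Prop) (w u : W) : Prop :=
  S u /\ (coxlen S (w * u) < coxlen S w)%N.

End Coxeter.

(* Everything is read off the reflection cocycle.  By the universal property,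
   w |-> (w, N(w)) is a homomorphism from W to the semidirect product of W
   with its power set, where N(s) = {s} and N(x y) = N(y) Δ y^-1 N(x) y.
   A letter s is a right descent of w iff s ∈ N(w), and every r ∈ N(w) is
   u^-1 a u for a letter a and a suffix u of a word for w; so N(w) ⊆ W_J
   for w ∈ W_J.  With W_I ∩ W_J = W_{I ∩ J} this shows that elements of W_C
   have no inversions in W_B and conversely, and that x g = h r with
   x, r ∈ W_B and g, h ∈ W_C forces x = r.  Each claim then follows by
   expanding N(-) at t with the cocycle identity; claim (4) also needs that
   for f ∈ W_B without descent t and w ∈ W_{C ∪ {t}}, f w f^-1 ∈ W_C only
   when w ∈ W_C. *)

From HB Require Import structures.
From mathcomp Require Import all_boot boolp zify.
From Stdlib Require Import ClassicalEpsilon.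
From Stdlib Require List.
Set Implicit Arguments. Unset Strict Implicit. Unset Printing Implicit Defensive.
Local Open Scope group_scope.

Section Words.
Variable W : groupType.

Lemma prodw_nil : prodw [::] = 1 :> W.
Proof. exact: big_nil. Qed.

Lemma prodw_cons a (l : seq W) : prodw (a :: l) = a * prodw l.
Proof. exact: big_cons. Qed.

Lemma prodw_cat (l1 l2 : seq W) : prodw (l1 ++ l2) = prodw l1 * prodw l2.
Proof. exact: big_cat. Qed.

Lemma Forall_del (P : W -> Prop) l1 a l2 :
  List.Forall P (l1 ++ a :: l2) -> List.Forall P (l1 ++ l2) /\ P a.
Proof.
case/List.Forall_app => ? /List.Forall_cons_iff[? ?].
by split=> //; apply/List.Forall_app.
Qed.

Lemma eq_conj (y r z : W) : (y * r * y^-1 == z) = (r == y^-1 * z * y).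
Proof.
apply/eqP/eqP => [<-|->]; first by rewrite !mulgA mulVg mul1g mulgVK.
by rewrite !mulgA mulgV mul1g mulgK.
Qed.

Lemma parabolic_ind (J P : W -> Prop) w :
  P 1 -> (forall x y, P x -> P y -> P (x * y)) ->
  (forall x, J x -> P x) -> (forall x, J x -> P x^-1) ->
  parabolic J w -> P w.
Proof.
move=> P1 PM PJ PJV [l [Jl <-]].
elim: l Jl => [|a l IH]; first by rewrite prodw_nil.
case/List.Forall_cons_iff => Ja Jl; rewrite prodw_cons; apply: PM (IH Jl).
by case: Ja => [/PJ|/PJV]; rewrite ?invgK.
Qed.

Lemma parabolic1 (J : W -> Prop) : parabolic J 1.
Proof. by exists [::]; rewrite prodw_nil. Qed.

Lemma parabolic_word (J : W -> Prop) l : List.Forall J l -> parabolic J (prodw l).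
Proof. by move=> Jl; exists l; split=> //; apply: List.Forall_impl Jl => x; left. Qed.

Lemma parabolic_gen (J : W -> Prop) x : J x -> parabolic J x.
Proof.
move=> Jx; rewrite -[x]mulg1 -prodw_nil -prodw_cons.
by apply: parabolic_word; constructor.
Qed.

Lemma parabolicM (J : W -> Prop) x y :
  parabolic J x -> parabolic J y -> parabolic J (x * y).
Proof.
move=> [lx [Jx <-]] [ly [Jy <-]].
by exists (lx ++ ly); rewrite prodw_cat; split=> //; apply/List.Forall_app.
Qed.

Lemma parabolicV (J : W -> Prop) x : parabolic J x -> parabolic J x^-1.
Proof.
move=> Jx; apply: (parabolic_ind (P := fun y => parabolic J y^-1) _ _ _ _ Jx)
  => [|y z Vy Vz|y Jy|y Jy]; rewrite ?invg1 ?invgM ?invgK.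
- exact: parabolic1.
- exact: parabolicM.
- exists [:: y^-1]; rewrite prodw_cons prodw_nil mulg1.
  by split=> //; constructor; rewrite ?invgK; auto.
- exact: parabolic_gen.
Qed.

Lemma parabolicJ (J : W -> Prop) x y :
  parabolic J x -> parabolic J y -> parabolic J (x * y * x^-1).
Proof. by move=> Jx Jy; apply/parabolicM/parabolicV/Jx/parabolicM. Qed.

Lemma parabolicW (I J : W -> Prop) w :
  (forall s, I s -> J s) -> parabolic I w -> parabolic J w.
Proof.
move=> IJ Iw; apply: (parabolic_ind (P := parabolic J) _ _ _ _ Iw)
  => [|x y|x /IJ|x /IJ].
- exact: parabolic1.
- exact: parabolicM.
- exact: parabolic_gen.
- by move/parabolic_gen/parabolicV.
Qed.

Lemma parabolic0 (J : W -> Prop) w : (forall x, ~ J x) -> parabolic J w -> w = 1.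
Proof.
move=> J0 Jw; apply: (parabolic_ind (P := eq^~ 1) _ _ _ _ Jw) => //.
- by move=> x y -> ->; rewrite mulg1.
- by move=> x /J0.
- by move=> x /J0.
Qed.

Lemma parabolic_single (J : W -> Prop) t w :
  t * t = 1 -> (forall x, J x -> x = t) -> parabolic J w -> w = 1 \/ w = t.
Proof.
move=> tt Jt Jw; apply: (parabolic_ind (P := fun x => x = 1 \/ x = t) _ _ _ _ Jw)
  => [|x y|x /Jt ->|x /Jt ->]; try by [left|right].
  by case=> ->; case=> ->; rewrite ?mul1g ?mulg1 ?tt; [left|right|right|left].
by right; apply: mulg1_eq.
Qed.

End Words.

Section ReflectionSdprod.
Variable W : groupType.

(* The semidirect product of W with its power set: subsets are coded by
   indicator functions, composed by symmetric difference, and W acts by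
   conjugation. *)
Record refl_sdprod := RSD { rsd_elt : W; rsd_set : W -> bool }.

HB.instance Definition _ := gen_eqMixin refl_sdprod.
HB.instance Definition _ := gen_choiceMixin refl_sdprod.

Definition rsd_one := RSD 1 (fun _ => false).
Definition rsd_mul p q := RSD (rsd_elt p * rsd_elt q)
  (fun r => rsd_set q r (+) rsd_set p (rsd_elt q * r * (rsd_elt q)^-1)).
Definition rsd_inv p :=
  RSD (rsd_elt p)^-1 (fun r => rsd_set p ((rsd_elt p)^-1 * r * rsd_elt p)).

Lemma rsd_ext p q : rsd_elt p = rsd_elt q -> rsd_set p =1 rsd_set q -> p = q.
Proof. by case: p q => [x A] [y B] /= -> /funext ->. Qed.

Lemma rsd_mulA : associative rsd_mul.
Proof.
move=> [x A] [y B] [z C]; apply: rsd_ext => [|r] /=; first by rewrite mulgA.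
by rewrite addbA invgM !mulgA.
Qed.

Lemma rsd_mul1g : left_id rsd_one rsd_mul.
Proof. by move=> [x A]; apply: rsd_ext => [|r] /=; rewrite ?mul1g ?addbF. Qed.

Lemma rsd_mulg1 : right_id rsd_one rsd_mul.
Proof. by move=> [x A]; apply: rsd_ext => [|r] /=; rewrite ?invg1 ?mulg1 ?mul1g. Qed.

Lemma rsd_mulVg : left_inverse rsd_one rsd_inv rsd_mul.
Proof.
move=> [x A]; apply: rsd_ext => [|r] /=; first by rewrite mulVg.
by rewrite !mulgA mulVg mul1g mulgVK addbb.
Qed.

Lemma rsd_mulgV : right_inverse rsd_one rsd_inv rsd_mul.
Proof.
move=> [x A]; apply: rsd_ext => [|r] /=; first by rewrite mulgV.
by rewrite invgK addbb.
Qed.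

HB.instance Definition _ :=
  isGroup.Build refl_sdprod rsd_mulA rsd_mul1g rsd_mulg1 rsd_mulVg rsd_mulgV.

End ReflectionSdprod.

Section Coxeter.
Variables (W : groupType) (S : W -> Prop).
Hypothesis coxS : coxeter_system S.
Local Notation len := (coxlen S).

Lemma mulSS s : S s -> s * s = 1.
Proof. by case: coxS => invol _ /invol[]. Qed.

Lemma S_neq1 s : S s -> s <> 1.
Proof. by case: coxS => invol _ /invol[]. Qed.

Lemma invS s : S s -> s^-1 = s.
Proof. by move/mulSS/mulg1_eq. Qed.

Definition rsd_gen (s : W) := RSD s (fun r => r == s).

Lemma rsd_gen_rel s t n :
  S s -> S t -> (s * t) ^+ n = 1 -> (rsd_gen s * rsd_gen t) ^+ n = 1.
Proof.
move=> Ss St xn1; set x := s * t; set p := rsd_gen s * rsd_gen t.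
have tV : t^-1 = t := invS St.
have xVt k : (x ^+ k)^-1 * t = t * x ^+ k.
  have xt : x ^ t = x^-1.
    by rewrite conjgE /x !invgM !invS // -!mulgA (mulSS St) mulg1.
  by rewrite -expVgn -xt -conjXg conjgE tV -!mulgA (mulSS St) mulg1.
(* the set part of p ^+ k is the sum of the {t x^j}, j < 2k; for k = n the
   terms j and n + j cancel *)
have pX k : rsd_elt (p ^+ k) = x ^+ k /\
    rsd_set (p ^+ k) =1 (fun r => \big[addb/false]_(j < k.*2) (r == t * x ^+ j)).
  elim: k => [|k [eltk setk]]; first by split=> // r; rewrite big_ord0.
  rewrite expgS; split=> [|r] /=; first by rewrite eltk expgS.
  rewrite setk eltk doubleS !big_ord_recr /= -addbA; congr (_ (+) (_ (+) _)).
    by rewrite eq_conj xVt -mulgA -expgnDr addnn.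
  rewrite !mulgA -(mulgA _ _ t^-1) -invgM eq_conj invgM tV !mulgA xVt.
  by rewrite -!mulgA (mulgA s t) -/x (mulgA (x ^+ k)) -expgSr -expgnDr addSn addnn.
have [eltn setn] := pX n.
apply: rsd_ext => [|r]; first by rewrite eltn xn1.
rewrite setn -addnn big_split_ord /=.
under [X in _ (+) X = _]eq_bigr => j _ do rewrite expgnDr xn1 mul1g.
exact: addbb.
Qed.

Definition rsd_rep_sig :=
  constructive_indefinite_description _ (coxS.2.2 _ rsd_gen rsd_gen_rel).
Definition rsd_rep : W -> refl_sdprod W := proj1_sig rsd_rep_sig.

Lemma rsd_repM x y : rsd_rep (x * y) = rsd_rep x * rsd_rep y.
Proof. exact: (proj2_sig rsd_rep_sig).1. Qed.

Lemma rsd_rep_gen s : S s -> rsd_rep s = rsd_gen s.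
Proof. exact: (proj2_sig rsd_rep_sig).2. Qed.

Lemma rsd_rep1 : rsd_rep 1 = 1.
Proof. by apply: (@mulgI _ (rsd_rep 1)); rewrite -rsd_repM !mulg1. Qed.

Lemma rsd_rep_elt w : rsd_elt (rsd_rep w) = w.
Proof.
have [l [Sl <-]] := coxS.2.1 w.
elim: l Sl => [|a l IH]; first by rewrite prodw_nil rsd_rep1.
by case/List.Forall_cons_iff=> Sa Sl; rewrite prodw_cons rsd_repM /= IH // rsd_rep_gen.
Qed.

(* [rinv w r]: [r] lies in the set N(w) of right inversions of [w]. *)
Definition rinv w r := rsd_set (rsd_rep w) r.

Lemma rinvM x y r : rinv (x * y) r = rinv y r (+) rinv x (y * r * y^-1).
Proof. by rewrite /rinv rsd_repM /= rsd_rep_elt. Qed.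

Lemma rinv_gen s r : S s -> rinv s r = (r == s).
Proof. by move=> Ss; rewrite /rinv rsd_rep_gen. Qed.

Lemma rinv1 r : rinv 1 r = false.
Proof. by rewrite /rinv rsd_rep1. Qed.

Lemma rinv_del (l : seq W) r : List.Forall S l -> rinv (prodw l) r ->
  exists l1 a l2, l = l1 ++ a :: l2 /\ prodw l * r = prodw (l1 ++ l2).
Proof.
elim: l => [|a l IH]; first by rewrite prodw_nil rinv1.
case/List.Forall_cons_iff => Sa Sl; rewrite prodw_cons rinvM (rinv_gen _ Sa).
case rl: (rinv (prodw l) r).
  move=> _; have [l1 [b [l2 [-> e]]]] := IH Sl rl.
  by exists (a :: l1), b, l2; rewrite !prodw_cons -mulgA e.
rewrite /= eq_conj => /eqP ->; exists [::], a, l; split=> //.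
by rewrite !mulgA mulgK (mulSS Sa) mul1g.
Qed.

Definition reduced_word (J : W -> Prop) w l :=
  List.Forall J l /\ size l = len w /\ prodw l = w.

Lemma coxlenP w :
  has_word_len S w (len w) /\ forall m, has_word_len S w m -> len w <= m.
Proof.
rewrite /coxlen; set P := (fun n => _); apply: (epsilon_spec _ P).
have [l [Sl lw]] := coxS.2.1 w.
have exP : exists n, `[< has_word_len S w n >].
  by exists (size l); apply/asboolP; exists l.
case: (ex_minnP exP) => n /asboolP wn minn.
by exists n; split=> // m /asboolP /minn.
Qed.

Lemma reduced_wordP w : exists l, reduced_word S w l.
Proof. exact: (coxlenP w).1. Qed.

Lemma coxlen_le l : List.Forall S l -> len (prodw l) <= size l.
Proof. by move=> Sl; apply: (coxlenP _).2; exists l. Qed.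

Lemma coxlen1 : len 1 = 0.
Proof. by apply/eqP; rewrite -leqn0 -prodw_nil; apply: coxlen_le. Qed.

Lemma coxlenM x y : len (x * y) <= len x + len y.
Proof.
have [lx [Sx [<- <-]]] := reduced_wordP x; have [ly [Sy [<- <-]]] := reduced_wordP y.
by rewrite -prodw_cat -size_cat; apply/coxlen_le/List.Forall_app.
Qed.

Lemma coxlen_gen s : S s -> len s = 1%N.
Proof.
move=> Ss; apply/anti_leq/andP; split.
  by rewrite -[s]mulg1 -prodw_nil -prodw_cons; apply: coxlen_le; constructor.
have [[|a l] [_ [/= <- ls]]] := reduced_wordP s => //.
by case: (S_neq1 Ss); rewrite -ls prodw_nil.
Qed.

Lemma rinv_lt w r : rinv w r -> len (w * r) < len w.
Proof.
have [l [Sl [<- <-]]] := reduced_wordP w.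
case/(rinv_del Sl) => l1 [a [l2 [ldel ->]]].
rewrite ldel in Sl *; apply: leq_ltn_trans (coxlen_le (Forall_del Sl).1) _.
by rewrite !size_cat /= addnS.
Qed.

Lemma rinvw1 w : rinv w 1 = false.
Proof. by apply/negP => /rinv_lt; rewrite mulg1 ltnn. Qed.

Lemma rinv_mulK w s : S s -> rinv (w * s) s = ~~ rinv w s.
Proof. by move=> Ss; rewrite rinvM rinv_gen // eqxx mulgK. Qed.

Lemma coxlen_mulS w s :
  S s -> len (w * s) = if rinv w s then (len w).-1 else (len w).+1.
Proof.
move=> Ss; have := coxlenM w s; have := coxlenM (w * s) s.
rewrite -mulgA (mulSS Ss) mulg1 (coxlen_gen Ss).
case ws: (rinv w s); first by have := rinv_lt ws; lia.
have := rinv_lt (etrans (rinv_mulK w Ss) (negbT ws)).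
by rewrite -mulgA (mulSS Ss) mulg1; lia.
Qed.

Lemma descentE w s : S s -> (len (w * s) < len w) = rinv w s.
Proof.
move=> Ss; case ws: (rinv w s); first exact: rinv_lt.
by rewrite coxlen_mulS // ws ltnNge leqnSn.
Qed.

Lemma coxlen_ind (P : W -> Prop) :
  (forall w, (forall v, len v < len w -> P v) -> P w) -> forall w, P w.
Proof.
move=> IH w; have [n] : exists n, len w <= n by exists (len w).
elim: n w => [|n IHn] w lw; apply: IH => v lv; first by lia.
by apply: IHn; lia.
Qed.

Section Parabolic.
Variable J : W -> Prop.
Hypothesis subJ : forall s, J s -> S s.

Lemma reduced_wordM w a l :
  reduced_word J w l -> J a -> exists l', reduced_word J (w * a) l'.
Proof.
move=> [Jl [lw ew]] Ja; subst w; have Sa := subJ Ja.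
have Sl : List.Forall S l := List.Forall_impl _ subJ Jl.
case wa: (rinv (prodw l) a).
  have [l1 [b [l2 [ldel e]]]] := rinv_del Sl wa.
  exists (l1 ++ l2); split; first by rewrite ldel in Jl; case: (Forall_del Jl).
  by rewrite -e coxlen_mulS // wa -lw ldel !size_cat /= addnS.
exists (l ++ [:: a]); rewrite /reduced_word size_cat prodw_cat prodw_cons prodw_nil.
rewrite mulg1 coxlen_mulS // wa lw addn1; split=> //.
by apply/List.Forall_app; split=> //; constructor.
Qed.

Lemma parabolic_reduced w : parabolic J w -> exists l, reduced_word J w l.
Proof.
move=> Jw.
have extend v : (exists l, reduced_word J v l) -> exists l, reduced_word J (v * w) l.
  move: v; apply: (parabolic_ind (P := fun w => forall v,
    (exists l, reduced_word J v l) -> exists l, reduced_word J (v * w) l) _ _ _ _ Jw).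
  - by move=> v; rewrite mulg1.
  - by move=> x y Px Py v /Px /Py; rewrite mulgA.
  - by move=> x Jx v [l /reduced_wordM/(_ Jx)].
  - by move=> x Jx v [l /reduced_wordM/(_ Jx)]; rewrite (invS (subJ Jx)).
rewrite -[w]mul1g; apply: extend; exists [::].
by split; [constructor | rewrite coxlen1 prodw_nil].
Qed.

Lemma parabolic_descent w : parabolic J w -> w = 1 \/ exists2 s, J s & rinv w s.
Proof.
case/parabolic_reduced => l [Jl [lw ew]]; subst w.
case/lastP: l Jl lw => [|l s]; first by left; rewrite prodw_nil.
rewrite -cats1 prodw_cat prodw_cons prodw_nil mulg1 size_cat addn1.
case/List.Forall_app => Jl /List.Forall_cons_iff[Js _] lw; right; exists s => //.
rewrite -(descentE _ (subJ Js)) -mulgA (mulSS (subJ Js)) mulg1 -lw ltnS.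
exact: coxlen_le (List.Forall_impl _ subJ Jl).
Qed.

Lemma parabolic_coxlen1 w : parabolic J w -> len w = 1%N -> J w.
Proof.
case/parabolic_reduced => l [Jl [lw ew]]; subst w; rewrite -lw.
case: l Jl {lw} => [|a [|b l]] //= /List.Forall_cons_iff[Ja _] _.
by rewrite prodw_cons prodw_nil mulg1.
Qed.

Lemma rinv_parabolic w r : parabolic J w -> rinv w r -> parabolic J r.
Proof.
case/parabolic_reduced => l [Jl [_ <-]].
case/(rinv_del (List.Forall_impl _ subJ Jl)) => l1 [a [l2 [ldel e]]].
rewrite -[r](mulKg (prodw l)) e; apply: parabolicM.
  exact/parabolicV/parabolic_word.
by rewrite ldel in Jl; apply/parabolic_word; case: (Forall_del Jl).
Qed.

End Parabolic.

Lemma parabolicI (I J : W -> Prop) x :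
  (forall s, I s -> S s) -> (forall s, J s -> S s) ->
  parabolic I x -> parabolic J x -> parabolic (fun s => I s /\ J s) x.
Proof.
move=> subI subJ; elim/coxlen_ind: x => x IH Ix Jx.
case: (parabolic_descent subI Ix) => [->|[s Is xs]]; first exact: parabolic1.
have Ss := subI s Is.
have Js : J s.
  by apply: (parabolic_coxlen1 subJ (rinv_parabolic subJ Jx xs)); rewrite coxlen_gen.
have IJs : parabolic (fun s => I s /\ J s) s by apply: parabolic_gen.
rewrite -[x](mulgK s) invS //; apply: parabolicM IJs.
apply: IH (rinv_lt xs) _ _; first exact: parabolicM Ix (parabolic_gen Is).
exact: parabolicM Jx (parabolic_gen Js).
Qed.

Lemma rinv_parabolic_disjoint (I J : W -> Prop) x r :
  (forall s, I s -> S s) -> (forall s, J s -> S s) -> (forall s, I s -> ~ J s) ->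
  parabolic I x -> parabolic J r -> rinv x r = false.
Proof.
move=> subI subJ disjIJ Ix Jr; apply/negP => xr.
have IJr := parabolicI subI subJ (rinv_parabolic subI Ix xr) Jr.
have r1 : r = 1 by apply: parabolic0 IJr => s [/disjIJ].
by rewrite r1 rinvw1 in xr.
Qed.

Section DisjointParabolics.
Variables B C : W -> Prop.
Hypotheses (subB : forall s, B s -> S s) (subC : forall s, C s -> S s).
Hypothesis disjBC : forall s, B s -> ~ C s.

Let disjCB s : C s -> ~ B s := fun Cs Bs => disjBC Bs Cs.
Let rinvBC x r := @rinv_parabolic_disjoint _ _ x r subB subC disjBC.
Let rinvCB x r := @rinv_parabolic_disjoint _ _ x r subC subB disjCB.

Lemma parabolic_disjoint x : parabolic B x -> parabolic C x -> x = 1.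
Proof.
by move=> Bx Cx; apply: parabolic0 (parabolicI subB subC Bx Cx) => s [/disjBC].
Qed.

Lemma coxlen_parabolicM f g :
  parabolic B f -> parabolic C g -> len (f * g) = (len f + len g)%N.
Proof.
move=> Bf; elim/coxlen_ind: g => g IH Cg.
case: (parabolic_descent subC Cg) => [->|[c Cc gc]].
  by rewrite mulg1 coxlen1 addn0.
have Sc := subC Cc; have Cgc := parabolicM Cg (parabolic_gen Cc).
have fgc : rinv (f * (g * c)) c = false.
  by rewrite rinvM rinv_mulK // gc (rinvBC Bf (parabolicJ Cgc (parabolic_gen Cc))).
have := coxlen_mulS g Sc; rewrite gc => lgc.
rewrite -[in LHS](mulgK c g) invS // mulgA coxlen_mulS // fgc (IH _ (rinv_lt gc) Cgc).
by have := rinv_lt gc; lia.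
Qed.

Lemma parabolic_factor_eq x r g h : parabolic B x -> parabolic B r ->
  parabolic C g -> parabolic C h -> x * g = h * r -> x = r.
Proof.
move=> Bx Br; elim/coxlen_ind: g h => g IH h Cg Ch e.
(* a descent c of g is a descent of x g = h r, and it can only come from h *)
case: (parabolic_descent subC Cg) => [g1|[c Cc gc]].
  rewrite g1 mulg1 in e; suff h1 : h = 1 by rewrite e h1 mul1g.
  apply: parabolic_disjoint => //.
  by rewrite -(mulgK r h) -e; apply/parabolicM/parabolicV.
have hrc : rinv h (r * c * r^-1).
  have : rinv (x * g) c.
    by rewrite rinvM gc (rinvBC Bx (parabolicJ Cg (parabolic_gen Cc))).
  by rewrite e rinvM (rinvBC Br (parabolic_gen Cc)).
apply: (IH (g * c) (rinv_lt gc) (h * (r * c * r^-1))).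
- exact: parabolicM Cg (parabolic_gen Cc).
- exact/parabolicM/(rinv_parabolic subC Ch hrc).
- by rewrite mulgA e -!mulgA mulVg mulg1.
Qed.

Lemma rinv_parabolic_mull g f r : parabolic C g -> parabolic B f ->
  parabolic B r -> rinv (g * f) r = rinv f r.
Proof.
by move=> Cg Bf Br; rewrite rinvM (rinvCB Cg (parabolicJ Bf Br)) addbF.
Qed.

Lemma rinv_parabolic_mulr f g r : parabolic B f -> parabolic C g ->
  parabolic B r -> rinv (f * g) r -> rinv f r.
Proof.
move=> Bf Cg Br; rewrite rinvM rinvCB //= => fr.
have Bgr := rinv_parabolic subB Bf fr.
by rewrite -(parabolic_factor_eq Bgr Br Cg Cg) // mulgVK.
Qed.

Let subCU1 t : B t -> forall s, C s \/ s = t -> S s.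
Proof. by move=> Bt s [/subC|->] //; apply: subB. Qed.

Lemma rinv_parabolicU1 f t r : parabolic B f -> B t -> ~~ rinv f t ->
  parabolic (fun s => C s \/ s = t) r -> rinv f r = false.
Proof.
move=> Bf Bt ft Jr; apply/negP => fr.
have BJt s : B s /\ (C s \/ s = t) -> s = t by case=> Bs [/(disjBC Bs)|].
have BJr := parabolicI subB (subCU1 Bt) (rinv_parabolic subB Bf fr) Jr.
case: (parabolic_single (mulSS (subB Bt)) BJt BJr) => [r1|rt].
  by rewrite r1 rinvw1 in fr.
by move: ft; rewrite -rt fr.
Qed.

Lemma parabolic_of_conj f t w : parabolic B f -> B t -> ~~ rinv f t ->
  parabolic (fun s => C s \/ s = t) w -> parabolic C (f * w * f^-1) ->
  parabolic C w.
Proof.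
move=> Bf Bt ft; elim/coxlen_ind: w => w IH Jw Cfw.
(* a descent s of w is one of f w = (f w f^-1) f, so f s f^-1 ∈ W_C *)
case: (parabolic_descent (subCU1 Bt) Jw) => [->|[s Js ws]]; first exact: parabolic1.
have Ss := subCU1 Bt Js; have Jws := parabolicM Jw (parabolic_gen Js).
have rinvJ := rinv_parabolicU1 Bf Bt ft.
have Cfsf : parabolic C (f * s * f^-1).
  have : rinv (f * w * f^-1 * f) s.
    by rewrite mulgVK rinvM ws (rinvJ _ (parabolicJ Jw (parabolic_gen Js))).
  rewrite rinvM (rinvJ _ (parabolic_gen Js)) /=; exact: (rinv_parabolic subC Cfw).
have Cs : C s.
  case: Js => // st; case: (S_neq1 (subB Bt)); apply: (mulgI f); rewrite mulg1.
  rewrite -st -[f in RHS]mul1g -(parabolic_disjoint _ Cfsf) ?mulgVK //.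
  by rewrite st; apply: parabolicJ Bf (parabolic_gen Bt).
have Cws : parabolic C (w * s).
  apply: IH (rinv_lt ws) Jws _.
  have -> : f * (w * s) * f^-1 = f * w * f^-1 * (f * s * f^-1) by rewrite !mulgA mulgVK.
  exact: parabolicM Cfw Cfsf.
by rewrite -[w](mulgK s) invS //; apply: parabolicM Cws (parabolic_gen Cs).
Qed.

Lemma rinv_conj_central f g g' s : parabolic B f -> parabolic C g ->
  parabolic C g' -> B s -> (forall c, C c -> c * s = s * c) ->
  rinv (g * f * g') s = rinv f s.
Proof.
move=> Bf Cg Cg' Bs sC; have Bs' := parabolic_gen Bs.
have sg' : commute s g'.
  apply: (parabolic_ind (P := commute s) _ _ _ _ Cg') => [|x y|c Cc|c Cc].
  - exact: commute1.
  - exact: commuteM.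
  - exact/commute_sym/sC.
  - exact/commuteV/commute_sym/sC.
rewrite rinvM (rinvCB Cg' Bs') -sg' mulgK /=.
exact: rinv_parabolic_mull.
Qed.

Lemma rinv_conjF f g g' t : parabolic B f -> parabolic C g ->
  parabolic C g' -> B t -> ~~ rinv f t -> ~~ rinv (g * f * g') t.
Proof.
move=> Bf Cg Cg' Bt ft; have Bt' := parabolic_gen Bt.
have fg't : ~~ rinv (f * g') t by apply: contra ft; apply: rinv_parabolic_mulr.
rewrite -mulgA rinvM (negbTE fg't) /=; apply/negP => /(rinv_parabolic subC Cg).
rewrite invgM !mulgA -(mulgA f g') -(mulgA f (g' * t)) => Cconj.
have Jw : parabolic (fun s => C s \/ s = t) (g' * t * g'^-1).
  by apply: parabolicJ; [apply: parabolicW Cg'; left | apply: parabolic_gen; right].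
have Cw := parabolic_of_conj Bf Bt ft Jw Cconj.
case: (S_neq1 (subB Bt)); apply: parabolic_disjoint => //.
by have := parabolicJ (parabolicV Cg') Cw; rewrite invgK !mulgA mulVg mul1g mulgVK.
Qed.

Lemma rinv_insert f f' g t : parabolic B f -> parabolic B f' ->
  parabolic C g -> B t -> len (f * f') = (len f + len f')%N ->
  rinv f' t -> rinv (f * g * f') t.
Proof.
move=> Bf Bf' Cg Bt lff' f't; have St := subB Bt.
have ff't : rinv (f * f') t.
  rewrite -descentE // lff' -mulgA; apply: leq_ltn_trans (coxlenM _ _) _.
  by rewrite ltn_add2l descentE.
have Br : parabolic B (f' * t * f'^-1) := parabolicJ Bf' (parabolic_gen Bt).
move: ff't; rewrite rinvM f't => /negP fr.
by rewrite rinvM f't; apply/negP => /(rinv_parabolic_mulr Bf Cg Br).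
Qed.

End DisjointParabolics.

End Coxeter.

Theorem lemma10p23 (W : groupType) (S B C : W -> Prop) (f f' g g' s t : W) :
  coxeter_system S ->
  (forall x, S x <-> B x \/ C x) -> (forall x, ~ (B x /\ C x)) ->
  parabolic B f -> parabolic B f' -> parabolic C g -> parabolic C g' ->
  B s -> (forall c, C c -> c * s = s * c) -> B t ->
  (coxlen S (f * g) = (coxlen S f + coxlen S g)%N /\
   coxlen S (g * f) = (coxlen S f + coxlen S g)%N) /\
  (rdescent S f s <-> rdescent S (g * f * g') s) /\
  (~ rdescent S f t -> ~ rdescent S (f * g) t) /\
  (rdescent S f t <-> rdescent S (g * f) t) /\
  (~ rdescent S f t -> ~ rdescent S (g * f * g') t) /\
  (coxlen S (f * f') = (coxlen S f + coxlen S f')%N ->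
     rdescent S f' t -> rdescent S (f * g * f') t).
Proof.
move=> coxS eqS disj Bf Bf' Cg Cg' Bs sC Bt.
have subB x : B x -> S x by move=> Bx; apply/eqS; left.
have subC x : C x -> S x by move=> Cx; apply/eqS; right.
have disjBC x : B x -> ~ C x by move=> Bx Cx; apply: (disj x).
have disjCB x : C x -> ~ B x by move=> Cx Bx; apply: (disj x).
have Bt' := parabolic_gen Bt.
rewrite /rdescent !(descentE coxS _ (subB _ Bs)) !(descentE coxS _ (subB _ Bt)).
split.
  by rewrite (coxlen_parabolicM coxS subB subC disjBC Bf Cg)
             (coxlen_parabolicM coxS subC subB disjCB Cg Bf) addnC.
split; first by rewrite (rinv_conj_central coxS subB subC disjBC Bf Cg Cg' Bs sC).
split.
  by move=> nft [St /(rinv_parabolic_mulr subB subC disjBC Bf Cg Bt') ft]; apply: nft.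
split; first by rewrite (rinv_parabolic_mull coxS subB subC disjBC Cg Bf Bt').
split.
  move=> nft [St]; apply/negP/(rinv_conjF subB subC disjBC Bf Cg Cg' Bt).
  by apply/negP => ?; apply: nft.
move=> lff' [St f't]; split=> //.
exact: (rinv_insert subB subC disjBC Bf Bf' Cg Bt lff' f't).
Qed.
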